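(* Let $\mathcal{H}$ be the map from labeled sequents to hypersequents defined below. For every instance of a rule $(r)$ of $\mathsf{L(S5)}$ with premises $S_1,\dots,S_n$ and conclusion $S$, the figure with premises $\mathcal{H}(S_1),\dots,\mathcal{H}(S_n)$ and conclusion $\mathcal{H}(S)$ is an instance of the corresponding rule of the hypersequent calculus $\mathsf{H(S5)}$, and every rule instance of $\mathsf{H(S5)}$ arises in this way. Consequently, applying $\mathcal{H}$ node-wise yields an isomorphism (shape- and rule-preserving correspondence) between derivations in $\mathsf{L(S5)}$ and derivations in $\mathsf{H(S5)}$ (treating hypersequents as multisets of components, i.e. with implicit external exchange).
   Context: Formulas are those of $\mathcal{L}_M$: $A ::= p \mid \neg A\mid A\rightarrow A\mid \Box A$. A labeled sequent is $\Gamma\Rightarrow\Delta$ with $\Gamma,\Delta$ finite multisets of labeled formulas $w:A$ ($w$ from a denumerable set of labels). For a multiset $\Gamma$ of labeled formulas, $\Gamma\restriction w$ is the multiset $\{A \mid w:A\in\Gamma\}$. The calculus $\mathsf{L(S5)}$ has rules: $(id)$ $\Gamma, w:p\Rightarrow w:p,\Delta$; $(\neg_l)$ from $\Gamma\Rightarrow w:A,\Delta$ infer $\Gamma,w:\neg A\Rightarrow\Delta$; $(\neg_r)$ from $\Gamma,w:A\Rightarrow\Delta$ infer $\Gamma\Rightarrow w:\neg A,\Delta$; $(\rightarrow_l)$ from $\Gamma\Rightarrow w:A,\Delta$ and $\Gamma,w:B\Rightarrow\Delta$ infer $\Gamma,w:A\rightarrow B\Rightarrow\Delta$; $(\rightarrow_r)$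 from $\Gamma,w:A\Rightarrow w:B,\Delta$ infer $\Gamma\Rightarrow w:A\rightarrow B,\Delta$; $(\Box_r)$ from $\Gamma\Rightarrow\Delta,y:A$ infer $\Gamma\Rightarrow\Delta,x:\Box A$ where $y$ is fresh (does not occur in the conclusion); $(\Box_l)$ from $\Gamma,x:\Box A,y:A\Rightarrow\Delta$ infer $\Gamma,x:\Box A\Rightarrow\Delta$ where $y$ occurs in $\Gamma\cup\Delta$ or $y=x$. A hypersequent is a multiset $\Gamma_1\Rightarrow\Delta_1\mid\cdots\mid\Gamma_n\Rightarrow\Delta_n$ of ordinary sequents (components, with $\Gamma_i,\Delta_i$ multisets of formulas); $H$ denotes an arbitrary (possibly empty) side hypersequent. For a labeled sequent $\Gamma\Rightarrow\Delta$ whose labels are exactly $w_1,\dots,w_n$, $\mathcal{H}(\Gamma\Rightarrow\Delta) := (\Gamma\restriction w_1\Rightarrow\Delta\restriction w_1)\mid\cdots\mid(\Gamma\restriction w_n\Rightarrow\Delta\restriction w_n)$. The calculus $\mathsf{H(S5)}$ consists of: $(id)$ $\Gamma,p\Rightarrow p,\Delta\mid H$; the propositional rules $(\neg_l),(\neg_r),(\rightarrow_l),(\rightarrow_r)$ applied to a single component with a side hypersequent $H$; $(\Box_{l1})$ from $\Gamma,\Box A,A\Rightarrow\Delta\mid H$ infer $\Gamma,\Box A\Rightarrow\Delta\mid H$; $(\Box_{l2})$ from $\Gamma_1,\Box A\Rightarrow\Delta_1\mid\Gamma_2,A\Rightarrow\Delta_2\mid H$ infer $\Gamma_1,\Box A\Rightarrow\Delta_1\mid\Gamma_2\Rightarrow\Delta_2\mid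 H$; $(\Box_r)$ from $\Gamma\Rightarrow\Delta\mid\ \Rightarrow A\mid H$ infer $\Gamma\Rightarrow\Delta,\Box A\mid H$. The labeled rule $(\Box_l)$ corresponds to $(\Box_{l1})$ when $y=x$ and to $(\Box_{l2})$ when $y\neq x$.
   Formalization: Each labeled sequent carries a set of labels containing its own; $\mathcal{H}$ gives one, possibly empty, component per label of it; freshness in $(\Box_r)$ and occurrence in $(\Box_l)$ mean non-membership and membership in it, the premise of $(\Box_r)$ adding y. Apart from conventions, each condition added here is assumed in the paper as well or is needed for the statement above to hold. *)

(* lists with Permutation model finite multisets. *)
From Stdlib Require Import List Permutation PeanoNat.
Import ListNotations.

Inductive fm : Type :=
| Var (p : nat)
| Neg (A : fm)
| Imp (A B : fm)
| Box (A : fm).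

Definition label := nat.
Definition lfm := (label * fm)%type.

Record lseq := LS { lab : list label; lant : list lfm; lsuc : list lfm }.

Definition lwf (S : lseq) : Prop :=
  NoDup (lab S) /\
  (forall wA, In wA (lant S) -> In (fst wA) (lab S)) /\
  (forall wA, In wA (lsuc S) -> In (fst wA) (lab S)).

Definition lseq_eq (S T : lseq) : Prop :=
  Permutation (lab S) (lab T) /\ Permutation (lant S) (lant T) /\
  Permutation (lsuc S) (lsuc T).

(* rule names; the labeled rule (Box_l) is tagged Rboxl1 when y = x and
   Rboxl2 when y <> x, which is the stated correspondence of rules. *)
Inductive rname : Type :=
| Rid | Rnegl | Rnegr | Rimpl | Rimpr | Rboxl1 | Rboxl2 | Rboxr.

Inductive lrule_raw : rname -> list lseq -> lseq -> Prop :=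
| lr_id W G D w p :
    lrule_raw Rid [] (LS W ((w, Var p) :: G) ((w, Var p) :: D))
| lr_negl W G D w A :
    lrule_raw Rnegl [LS W G ((w, A) :: D)] (LS W ((w, Neg A) :: G) D)
| lr_negr W G D w A :
    lrule_raw Rnegr [LS W ((w, A) :: G) D] (LS W G ((w, Neg A) :: D))
| lr_impl W G D w A B :
    lrule_raw Rimpl [LS W G ((w, A) :: D); LS W ((w, B) :: G) D]
                    (LS W ((w, Imp A B) :: G) D)
| lr_impr W G D w A B :
    lrule_raw Rimpr [LS W ((w, A) :: G) ((w, B) :: D)]
                    (LS W G ((w, Imp A B) :: D))
| lr_boxr W G D x y A :
    ~ In y W ->
    lrule_raw Rboxr [LS (y :: W) G ((y, A) :: D)]
                    (LS W G ((x, Box A) :: D))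
| lr_boxl1 W G D x A :
    lrule_raw Rboxl1 [LS W ((x, A) :: (x, Box A) :: G) D]
                     (LS W ((x, Box A) :: G) D)
| lr_boxl2 W G D x y A :
    In y W -> y <> x ->
    lrule_raw Rboxl2 [LS W ((y, A) :: (x, Box A) :: G) D]
                     (LS W ((x, Box A) :: G) D).

Definition lrule (r : rname) (Ss : list lseq) (S : lseq) : Prop :=
  exists Ss' S', Forall2 lseq_eq Ss Ss' /\ lseq_eq S S' /\
    lrule_raw r Ss' S' /\ lwf S /\ Forall lwf Ss.

Definition comp := (list fm * list fm)%type.
Definition hseq := list comp.

Definition comp_eq (c d : comp) : Prop :=
  Permutation (fst c) (fst d) /\ Permutation (snd c) (snd d).

Definition hs_eq (H1 H2 : hseq) : Prop :=
  exists H1', Permutation H1 H1' /\ Forall2 comp_eq H1' H2.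

Inductive hrule_raw : rname -> list hseq -> hseq -> Prop :=
| hr_id G D p H :
    hrule_raw Rid [] ((Var p :: G, Var p :: D) :: H)
| hr_negl G D A H :
    hrule_raw Rnegl [(G, A :: D) :: H] ((Neg A :: G, D) :: H)
| hr_negr G D A H :
    hrule_raw Rnegr [(A :: G, D) :: H] ((G, Neg A :: D) :: H)
| hr_impl G D A B H :
    hrule_raw Rimpl [(G, A :: D) :: H; (B :: G, D) :: H]
                    ((Imp A B :: G, D) :: H)
| hr_impr G D A B H :
    hrule_raw Rimpr [(A :: G, B :: D) :: H] ((G, Imp A B :: D) :: H)
| hr_boxl1 G D A H :
    hrule_raw Rboxl1 [(A :: Box A :: G, D) :: H] ((Box A :: G, D) :: H)
| hr_boxl2 G1 D1 G2 D2 A H :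
    hrule_raw Rboxl2 [(Box A :: G1, D1) :: (A :: G2, D2) :: H]
                     ((Box A :: G1, D1) :: (G2, D2) :: H)
| hr_boxr G D A H :
    hrule_raw Rboxr [(G, D) :: ([], [A]) :: H] ((G, Box A :: D) :: H).

Definition hrule (r : rname) (Hs : list hseq) (G : hseq) : Prop :=
  exists Hs' G', Forall2 hs_eq Hs Hs' /\ hs_eq G G' /\ hrule_raw r Hs' G'.

Definition restrict (G : list lfm) (w : label) : list fm :=
  map snd (filter (fun wA => Nat.eqb (fst wA) w) G).

Definition hyp (S : lseq) : hseq :=
  map (fun w => (restrict (lant S) w, restrict (lsuc S) w)) (lab S).

Inductive tree (A : Type) : Type :=
| Node : rname -> A -> list (tree A) -> tree A.
Arguments Node {A}.

Definition root {A} (t : tree A) : A := match t with Node _ a _ => a end.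

Inductive derivation {A} (R : rname -> list A -> A -> Prop) : tree A -> Prop :=
| der_node r a ts :
    R r (map root ts) a -> Forall (derivation R) ts ->
    derivation R (Node r a ts).

Fixpoint tmap {A B} (f : A -> B) (t : tree A) : tree B :=
  match t with Node r a ts => Node r (f a) (map (tmap f) ts) end.

Inductive tree_rel {A B} (E : A -> B -> Prop) : tree A -> tree B -> Prop :=
| trel r a b ts us :
    E a b -> Forall2 (tree_rel E) ts us -> tree_rel E (Node r a ts) (Node r b us).

(* A labeled sequent S over distinct labels that cover all its formulas is determined up to
   multiset equality by its hypersequent: S is a reordering of the sequent obtained by tagging
   the formulas of the i-th component of hyp S with the i-th label.  Conversely every
   hypersequent is hyp of such a sequent, tagging its components with distinct labels.  Under
   this correspondence a labeled rule acting at the label w is the hypersequent rule acting on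
   the component of w, the fresh label of (Box_r) becomes the new component "=> A", and
   (Box_l) with y <> x acts on the two components of x and y.  Derivations are transported by
   induction on trees: lifting the rule at a node yields the labeled premises, which become the
   roots of the lifted subderivations. *)

From Stdlib Require Import List Permutation PeanoNat Lia Setoid.
Import ListNotations.

Lemma Permutation_filter {A} (f : A -> bool) l l' :
  Permutation l l' -> Permutation (filter f l) (filter f l').
Proof.
  induction 1 as [| x l l' _ IH | x y l | l l' l'' _ IH1 _ IH2]; simpl.
  - constructor.
  - destruct (f x); auto.
  - destruct (f x), (f y); auto using perm_swap.
  - etransitivity; eauto.
Qed.

#[export] Instance Forall2_Equivalence {A} (R : A -> A -> Prop) :
  Equivalence R -> Equivalence (Forall2 R).
Proof.
  intros HR; split.
  - intro l; induction l; constructor; auto; reflexivity.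
  - intros l l' H; induction H; constructor; auto; symmetry; auto.
  - intros l1 l2 l3 H; revert l3; induction H as [|x y l l' Hxy _ IH];
      intros l3 H'; inversion H'; subst; constructor; eauto; etransitivity; eauto.
Qed.

Lemma restrict_app G1 G2 v : restrict (G1 ++ G2) v = restrict G1 v ++ restrict G2 v.
Proof. unfold restrict; rewrite filter_app, map_app; reflexivity. Qed.

Lemma restrict_map_pair w l v :
  restrict (map (pair w) l) v = if Nat.eqb w v then l else [].
Proof.
  unfold restrict; induction l as [|A l IH]; simpl; [now destruct (Nat.eqb w v)|].
  destruct (Nat.eqb w v); simpl; now rewrite IH.
Qed.

Lemma restrict_at w l G : restrict (map (pair w) l ++ G) w = l ++ restrict G w.
Proof. now rewrite restrict_app, restrict_map_pair, Nat.eqb_refl. Qed.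

Lemma restrict_elsewhere w l G v :
  w <> v -> restrict (map (pair w) l ++ G) v = restrict G v.
Proof. intros Hwv; apply Nat.eqb_neq in Hwv; now rewrite restrict_app, restrict_map_pair, Hwv. Qed.

Lemma restrict_absent G v : (forall a, In a G -> fst a <> v) -> restrict G v = [].
Proof.
  induction G as [|[w A] G IH]; intros HG; [reflexivity|].
  change ((w, A) :: G) with (map (pair w) [A] ++ G).
  rewrite restrict_elsewhere by exact (HG (w, A) (in_eq _ _)).
  apply IH; intros a Ha; apply HG, in_cons, Ha.
Qed.

Lemma restrict_perm G G' v : Permutation G G' -> Permutation (restrict G v) (restrict G' v).
Proof. intros HG; apply Permutation_map, Permutation_filter, HG. Qed.

#[export] Instance comp_eq_Equivalence : Equivalence comp_eq.
Proof.
  split.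
  - intro c; split; reflexivity.
  - intros c d [H1 H2]; split; symmetry; assumption.
  - intros c d e [H1 H2] [H3 H4]; split; etransitivity; eassumption.
Qed.

#[export] Instance hs_eq_Equivalence : Equivalence hs_eq.
Proof.
  split.
  - intro h; exists h; split; reflexivity.
  - intros h h' (h1 & Hp & HF).
    destruct (Permutation_Forall2 (Permutation_sym Hp) HF) as (h2 & Hp' & HF').
    exists h2; split; [exact Hp' | symmetry; exact HF'].
  - intros h1 h2 h3 (a & Hpa & HFa) (b & Hpb & HFb).
    symmetry in HFa.
    destruct (Permutation_Forall2 Hpb HFa) as (c & Hpc & HFc).
    exists c; split; [etransitivity; eassumption|].
    symmetry in HFc; etransitivity; eassumption.
Qed.

Lemma hs_eq_perm h h' : Permutation h h' -> hs_eq h h'.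
Proof. intros Hp; exists h'; split; [exact Hp | reflexivity]. Qed.

#[export] Instance lseq_eq_Equivalence : Equivalence lseq_eq.
Proof.
  split.
  - intro S; repeat split; reflexivity.
  - intros S T (H1 & H2 & H3); repeat split; symmetry; assumption.
  - intros S T U (H1 & H2 & H3) (H4 & H5 & H6); repeat split; etransitivity; eassumption.
Qed.

Definition component (G D : list lfm) (w : label) : comp := (restrict G w, restrict D w).

Lemma hyp_components S : hyp S = map (component (lant S) (lsuc S)) (lab S).
Proof. reflexivity. Qed.

Lemma hyp_cons_label w W G D : hyp (LS (w :: W) G D) = component G D w :: hyp (LS W G D).
Proof. reflexivity. Qed.

Lemma hyp_lseq_eq S T : lseq_eq S T -> hs_eq (hyp S) (hyp T).
Proof.
  intros (HW & HG & HD); rewrite !hyp_components.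
  exists (map (component (lant S) (lsuc S)) (lab T)); split.
  - apply Permutation_map, HW.
  - clear HW; induction (lab T); constructor; auto.
    split; apply restrict_perm; assumption.
Qed.

Lemma lwf_lseq_eq S T : lwf S -> lseq_eq S T -> lwf T.
Proof.
  intros (Hn & HG & HD) (EW & EG & ED); repeat split.
  - eapply Permutation_NoDup; eassumption.
  - intros a Ha; apply (Permutation_in _ EW), HG, (Permutation_in _ (Permutation_sym EG)), Ha.
  - intros a Ha; apply (Permutation_in _ EW), HD, (Permutation_in _ (Permutation_sym ED)), Ha.
Qed.

Lemma hyp_extend_elsewhere W w Γ Δ G D : ~ In w W ->
  hyp (LS W (map (pair w) Γ ++ G) (map (pair w) Δ ++ D)) = hyp (LS W G D).
Proof.
  intros Hw; rewrite !hyp_components; apply map_ext_in; intros v Hv; unfold component; simpl.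
  rewrite !restrict_elsewhere; [reflexivity | intros ->; contradiction ..].
Qed.

Lemma hyp_focus W W0 w Γ Δ G D : Permutation W (w :: W0) -> ~ In w W0 ->
  Permutation (hyp (LS W (map (pair w) Γ ++ G) (map (pair w) Δ ++ D)))
              ((Γ ++ restrict G w, Δ ++ restrict D w) :: hyp (LS W0 G D)).
Proof.
  intros Hp Hw; rewrite hyp_components.
  etransitivity; [apply Permutation_map, Hp|]; simpl.
  unfold component at 1; rewrite !restrict_at.
  rewrite <- (hyp_extend_elsewhere W0 w Γ Δ G D Hw); reflexivity.
Qed.

Lemma NoDup_focus {A} (W : list A) w : NoDup W -> In w W ->
  exists W0, Permutation W (w :: W0) /\ ~ In w W0 /\ NoDup W0.
Proof.
  intros Hn Hi; destruct (in_split _ _ Hi) as (W1 & W2 & ->); exists (W1 ++ W2).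
  split; [symmetry; apply Permutation_middle|].
  split; [eapply NoDup_remove_2 | eapply NoDup_remove_1]; eassumption.
Qed.

Fixpoint label_all (W : list label) (Ls : list (list fm)) : list lfm :=
  match W, Ls with
  | w :: W', L :: Ls' => map (pair w) L ++ label_all W' Ls'
  | _, _ => []
  end.

Definition label_hseq (W : list label) (h : hseq) : lseq :=
  LS W (label_all W (map fst h)) (label_all W (map snd h)).

Lemma label_all_labels W Ls a : In a (label_all W Ls) -> In (fst a) W.
Proof.
  revert Ls; induction W as [|w W IH]; intros [|L Ls] Ha; simpl in Ha; try contradiction.
  apply in_app_or in Ha as [Ha|Ha].
  - apply in_map_iff in Ha as (A & <- & _); left; reflexivity.
  - right; eapply IH; eassumption.
Qed.

Lemma restrict_label_all_out W Ls v : ~ In v W -> restrict (label_all W Ls) v = [].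
Proof.
  intros Hv; apply restrict_absent; intros a Ha <-; apply Hv, (label_all_labels _ _ _ Ha).
Qed.

Lemma lwf_label_hseq W h : NoDup W -> lwf (label_hseq W h).
Proof. intros Hn; repeat split; auto; intros a; apply label_all_labels. Qed.

Lemma hyp_label_hseq W h : NoDup W -> length W = length h -> hyp (label_hseq W h) = h.
Proof.
  revert h; induction W as [|w W IH]; intros [|[G D] h] Hn Hl; try discriminate; [reflexivity|].
  inversion Hn as [|? ? Hw Hn']; subst.
  unfold label_hseq; cbn [map label_all]; rewrite hyp_cons_label.
  unfold component; rewrite hyp_extend_elsewhere, !restrict_at, !restrict_label_all_out, !app_nil_r
    by assumption.
  f_equal; apply IH; auto.
Qed.

Lemma label_all_restrict_cons W G v A : NoDup W -> In v W ->
  Permutation (label_all W (map (restrict ((v, A) :: G)) W))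
              ((v, A) :: label_all W (map (restrict G) W)).
Proof.
  assert (Hat : restrict ((v, A) :: G) v = A :: restrict G v) by exact (restrict_at v [A] G).
  assert (Hel : forall u, v <> u -> restrict ((v, A) :: G) u = restrict G u)
    by exact (restrict_elsewhere v [A] G).
  induction W as [|w W IH]; intros Hn Hv; [contradiction|].
  inversion Hn as [|? ? Hw Hn']; subst; simpl.
  destruct (Nat.eq_dec v w) as [<-|Hvw].
  - rewrite Hat; simpl; apply perm_skip.
    rewrite (map_ext_in _ (restrict G) W); [reflexivity|].
    intros u Hu; apply Hel; intros ->; contradiction.
  - rewrite Hel by exact Hvw.
    destruct Hv as [->|Hv]; [contradiction|].
    rewrite (IH Hn' Hv); symmetry; apply Permutation_middle.
Qed.

Lemma label_all_restrict W G : NoDup W -> (forall a, In a G -> In (fst a) W) ->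
  Permutation G (label_all W (map (restrict G) W)).
Proof.
  intros Hn; induction G as [|[v A] G IH]; intros HG.
  - clear Hn HG; induction W; simpl; [constructor | assumption].
  - rewrite label_all_restrict_cons by (exact Hn || exact (HG _ (in_eq _ _))).
    apply perm_skip, IH; intros a Ha; apply HG, in_cons, Ha.
Qed.

Lemma label_hseq_components S W : lwf S -> Permutation (lab S) W ->
  lseq_eq S (label_hseq W (map (component (lant S) (lsuc S)) W)).
Proof.
  intros (Hn & HG & HD) Hp; unfold label_hseq; rewrite !map_map; simpl.
  assert (HnW : NoDup W) by (eapply Permutation_NoDup; eassumption).
  split; [exact Hp | split]; apply label_all_restrict; try assumption;
    intros a Ha; apply (Permutation_in _ Hp); auto.
Qed.

Lemma label_hseq_comp_eq W h h' : Forall2 comp_eq h h' -> lseq_eq (label_hseq W h) (label_hseq W h').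
Proof.
  intros Hh; revert W; induction Hh as [|c c' h h' [Ha Hs] _ IH]; intros [|w W];
    try reflexivity.
  destruct (IH W) as (_ & IHa & IHs).
  split; [reflexivity | split]; simpl; apply Permutation_app; auto; apply Permutation_map; assumption.
Qed.

Lemma lseq_eq_label_hseq S G : lwf S -> hs_eq (hyp S) G ->
  exists W, NoDup W /\ length W = length G /\ lseq_eq S (label_hseq W G).
Proof.
  intros HS (G1 & Hp & HF); rewrite hyp_components in Hp.
  destruct (Permutation_map_inv _ _ (Permutation_sym Hp)) as (W & -> & HW).
  exists W; split; [|split].
  - destruct HS as (Hn & _); eapply Permutation_NoDup; eassumption.
  - rewrite <- (Forall2_length HF), length_map; reflexivity.
  - rewrite (label_hseq_components S W HS HW); apply label_hseq_comp_eq, HF.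
Qed.

Lemma fresh_label (W : list label) : exists y, ~ In y W.
Proof.
  exists (S (list_max W)); intros Hy.
  assert (Hle : Forall (fun k => k <= list_max W) W) by (apply list_max_le; reflexivity).
  rewrite Forall_forall in Hle; specialize (Hle _ Hy); lia.
Qed.

Lemma hyp_surjective (h : hseq) : exists S, lwf S /\ hyp S = h.
Proof.
  exists (label_hseq (seq 0 (length h)) h); split.
  - apply lwf_label_hseq, seq_NoDup.
  - apply hyp_label_hseq; [apply seq_NoDup | apply length_seq].
Qed.

Lemma hyp_focus_in W w : NoDup W -> In w W -> exists W0, forall Γ Δ G D,
  Permutation (hyp (LS W (map (pair w) Γ ++ G) (map (pair w) Δ ++ D)))
              ((Γ ++ restrict G w, Δ ++ restrict D w) :: hyp (LS W0 G D)).
Proof.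
  intros Hn Hw; destruct (NoDup_focus W w Hn Hw) as (W0 & Hp & Hw0 & _).
  exists W0; intros; apply hyp_focus; assumption.
Qed.

Lemma hyp_focus_in2 W x y : NoDup W -> In x W -> In y W -> x <> y -> exists W1, forall Γx Δx Γy Δy G D,
  Permutation (hyp (LS W (map (pair y) Γy ++ map (pair x) Γx ++ G)
                         (map (pair y) Δy ++ map (pair x) Δx ++ D)))
              ((Γx ++ restrict G x, Δx ++ restrict D x)
                 :: (Γy ++ restrict G y, Δy ++ restrict D y) :: hyp (LS W1 G D)).
Proof.
  intros Hn Hx Hy Hxy; destruct (NoDup_focus W y Hn Hy) as (W0 & Hp & Hy0 & Hn0).
  assert (Hx0 : In x W0) by (destruct (Permutation_in _ Hp Hx); [congruence | assumption]).
  destruct (hyp_focus_in W0 x Hn0 Hx0) as (W1 & Hf); exists W1; intros.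
  rewrite (hyp_focus W W0 y Γy Δy _ _ Hp Hy0), !restrict_elsewhere by exact Hxy.
  rewrite Hf; apply perm_swap.
Qed.

Lemma hyp_fresh_label W y A G D : ~ In y W ->
  (forall a, In a G -> In (fst a) W) -> (forall a, In a D -> In (fst a) W) ->
  hyp (LS (y :: W) G ((y, A) :: D)) = ([], [A]) :: hyp (LS W G D).
Proof.
  intros Hy HG HD.
  rewrite hyp_cons_label; change ((y, A) :: D) with (map (pair y) [A] ++ D).
  rewrite <- (hyp_extend_elsewhere W y [] [A] G D Hy).
  unfold component; rewrite restrict_at.
  rewrite !(restrict_absent _ y); [reflexivity | intros a Ha <-; apply Hy; auto ..].
Qed.

Tactic Notation "by_focus" constr(Hf) uconstr(Γ) uconstr(Δ) :=
  apply hs_eq_perm; exact (Hf Γ Δ _ _).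

Lemma hrule_raw_of_lrule_raw r Ss S : lrule_raw r Ss S -> lwf S ->
  exists Hs G, Forall2 hs_eq (map hyp Ss) Hs /\ hs_eq (hyp S) G /\ hrule_raw r Hs G.
Proof.
  intros Hr (Hn & HA & HS);
    destruct Hr as [W G D w p | W G D w A | W G D w A | W G D w A B | W G D w A B
                   | W G D w y A Hy | W G D w A | W G D w y A Hy Hyw];
    simpl in HA, HS.
  - destruct (hyp_focus_in W w Hn (HA _ (in_eq _ _))) as (W0 & Hf).
    eexists [], _; split; [constructor | split; [by_focus Hf [Var p] [Var p] | constructor]].
  - destruct (hyp_focus_in W w Hn (HA _ (in_eq _ _))) as (W0 & Hf).
    eexists [_], _; split; [constructor; [by_focus Hf [] [A] | constructor]|].
    split; [by_focus Hf [Neg A] [] | constructor].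
  - destruct (hyp_focus_in W w Hn (HS _ (in_eq _ _))) as (W0 & Hf).
    eexists [_], _; split; [constructor; [by_focus Hf [A] [] | constructor]|].
    split; [by_focus Hf [] [Neg A] | constructor].
  - destruct (hyp_focus_in W w Hn (HA _ (in_eq _ _))) as (W0 & Hf).
    eexists [_; _], _;
      split; [constructor; [by_focus Hf [] [A] | constructor; [by_focus Hf [B] [] | constructor]]|].
    split; [by_focus Hf [Imp A B] [] | constructor].
  - destruct (hyp_focus_in W w Hn (HS _ (in_eq _ _))) as (W0 & Hf).
    eexists [_], _; split; [constructor; [by_focus Hf [A] [B] | constructor]|].
    split; [by_focus Hf [] [Imp A B] | constructor].
  - destruct (hyp_focus_in W w Hn (HS _ (in_eq _ _))) as (W0 & Hf).
    eexists [_], _; split; [constructor; [|constructor]|].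
    { rewrite (hyp_fresh_label W y A G D Hy HA (fun a Ha => HS a (in_cons _ _ _ Ha))).
      apply hs_eq_perm.
      etransitivity; [apply perm_skip, (Hf [] [] G D) | apply perm_swap]. }
    split; [by_focus Hf [] [Box A] | constructor].
  - destruct (hyp_focus_in W w Hn (HA _ (in_eq _ _))) as (W0 & Hf).
    eexists [_], _; split; [constructor; [by_focus Hf [A; Box A] [] | constructor]|].
    split; [by_focus Hf [Box A] [] | constructor].
  - destruct (hyp_focus_in2 W w y Hn (HA _ (in_eq _ _)) Hy (not_eq_sym Hyw)) as (W1 & Hf).
    eexists [_], _; split; [constructor; [|constructor]|].
    { apply hs_eq_perm; exact (Hf [Box A] [] [A] [] G D). }
    split; [apply hs_eq_perm; exact (Hf [Box A] [] [] [] G D) | constructor].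
Qed.

Lemma lrule_of_premises r Ss Ss' S S' Hs : lwf S -> lseq_eq S S' -> Forall lwf Ss ->
  Forall2 hs_eq (map hyp Ss) Hs -> Forall2 lseq_eq Ss Ss' -> lrule_raw r Ss' S' ->
  exists Ss, lrule r Ss S /\ Forall2 hs_eq (map hyp Ss) Hs.
Proof.
  intros HS HSS' HSs HHs HSs' Hr; exists Ss; split; [|exact HHs].
  exists Ss', S'; exact (conj HSs' (conj HSS' (conj Hr (conj HS HSs)))).
Qed.

Lemma lrule_of_same_labels r Hs G W S : NoDup W -> lwf S -> lseq_eq S (label_hseq W G) ->
  Forall (fun P => length W = length P) Hs ->
  lrule_raw r (map (label_hseq W) Hs) (label_hseq W G) ->
  exists Ss, lrule r Ss S /\ Forall2 hs_eq (map hyp Ss) Hs.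
Proof.
  intros Hn HS HSG Hl Hr.
  assert (Hwf : Forall lwf (map (label_hseq W) Hs)).
  { apply Forall_forall; intros P HP; apply in_map_iff in HP as (h & <- & _).
    apply lwf_label_hseq, Hn. }
  assert (Hhyp : map hyp (map (label_hseq W) Hs) = Hs).
  { clear - Hn Hl; rewrite map_map; induction Hl as [|P Hs HP _ IH]; [reflexivity|].
    simpl; rewrite hyp_label_hseq, IH by assumption; reflexivity. }
  apply (lrule_of_premises r (map (label_hseq W) Hs) (map (label_hseq W) Hs) S (label_hseq W G) Hs
           HS HSG Hwf); [rewrite Hhyp; reflexivity | reflexivity | exact Hr].
Qed.

Lemma lrule_of_hrule_raw r Hs G W S : NoDup W -> length W = length G ->
  lwf S -> lseq_eq S (label_hseq W G) -> hrule_raw r Hs G ->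
  exists Ss, lrule r Ss S /\ Forall2 hs_eq (map hyp Ss) Hs.
Proof.
  intros Hn Hl HS HSG Hr.
  destruct Hr as [G0 D0 p H | G0 D0 A H | G0 D0 A H | G0 D0 A B H | G0 D0 A B H
                 | G0 D0 A H | G1 D1 G2 D2 A H | G0 D0 A H];
    destruct W as [|w W]; try discriminate.
  all: try (apply (lrule_of_same_labels _ _ _ _ S Hn HS HSG);
            [repeat constructor; exact Hl | simpl; constructor]).
  - destruct W as [|y W]; [discriminate|].
    inversion Hn as [|? ? Hw Hn']; subst.
    apply (lrule_of_premises Rboxl2 [label_hseq (w :: y :: W) ((Box A :: G1, D1) :: (A :: G2, D2) :: H)]
             [LS (w :: y :: W)
                 ((y, A) :: (w, Box A) :: map (pair w) G1 ++ map (pair y) G2 ++ label_all W (map fst H))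
                 (map (pair w) D1 ++ map (pair y) D2 ++ label_all W (map snd H))]
             S _ _ HS HSG).
    + constructor; [apply lwf_label_hseq, Hn | constructor].
    + simpl map; rewrite hyp_label_hseq by (assumption || (simpl in *; congruence)); reflexivity.
    + constructor; [|constructor]; split; [reflexivity | split; [|reflexivity]]; simpl.
      symmetry; apply (Permutation_middle ((w, Box A) :: _)).
    + apply lr_boxl2; [right; left; reflexivity | intros ->; apply Hw; left; reflexivity].
  - destruct (fresh_label (w :: W)) as (y & Hy).
    pose (P := label_hseq (y :: w :: W) (([], [A]) :: (G0, D0) :: H)).
    apply (lrule_of_premises Rboxr [P] [P] S _ _ HS HSG).
    + constructor; [apply lwf_label_hseq; constructor; assumption | constructor].
    + constructor; [|constructor]; unfold P.
      rewrite hyp_label_hseq by (first [constructor; assumption | simpl in *; congruence]).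
      apply hs_eq_perm, perm_swap.
    + reflexivity.
    + exact (lr_boxr (w :: W) _ _ w y A Hy).
Qed.

Lemma hrule_of_lrule r Ss S : lrule r Ss S -> hrule r (map hyp Ss) (hyp S).
Proof.
  intros (Ss' & S' & HSs & HS & Hr & Hwf & _).
  destruct (hrule_raw_of_lrule_raw r Ss' S' Hr (lwf_lseq_eq S S' Hwf HS))
    as (Hs & G & HHs & HG & Hr').
  exists Hs, G; split; [|split; [rewrite (hyp_lseq_eq S S' HS); exact HG | exact Hr']].
  rewrite <- HHs; clear - HSs; induction HSs; constructor; auto using hyp_lseq_eq.
Qed.

Lemma lrule_of_hrule r Hs G S : hrule r Hs G -> lwf S -> hs_eq (hyp S) G ->
  exists Ss, lrule r Ss S /\ Forall2 hs_eq (map hyp Ss) Hs.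
Proof.
  intros (Hs' & G' & HHs & HG & Hr) HS HSG.
  destruct (lseq_eq_label_hseq S G' HS (transitivity HSG HG)) as (W & Hn & Hl & HSW).
  destruct (lrule_of_hrule_raw r Hs' G' W S Hn Hl HS HSW Hr) as (Ss & HL & HSs).
  exists Ss; split; [exact HL | rewrite HSs; symmetry; exact HHs].
Qed.

Lemma derivation_ind_nested {A} (R : rname -> list A -> A -> Prop) (P : tree A -> Prop) :
  (forall r a ts, R r (map root ts) a -> Forall (derivation R) ts -> Forall P ts ->
     P (Node r a ts)) ->
  forall t, derivation R t -> P t.
Proof.
  intros HP; fix IH 2; intros t [r a ts HR Hts]; apply HP; [exact HR | exact Hts|].
  clear HR; induction Hts as [|u us Hu _ IHus]; constructor; [apply IH, Hu | exact IHus].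
Qed.

Lemma map_root_tmap {A B} (f : A -> B) ts : map root (map (tmap f) ts) = map f (map root ts).
Proof. rewrite !map_map; apply map_ext; intros [? ? ?]; reflexivity. Qed.

Lemma derivation_tmap_hyp t : derivation lrule t -> derivation hrule (tmap hyp t).
Proof.
  intros Hd; elim Hd using derivation_ind_nested; clear t Hd; intros r S ts HR _ IH.
  change (derivation hrule (Node r (hyp S) (map (tmap hyp) ts))); constructor.
  - rewrite map_root_tmap; apply hrule_of_lrule, HR.
  - apply Forall_map, IH.
Qed.

Lemma derivation_lift t' : derivation hrule t' -> forall S, lwf S -> hs_eq (hyp S) (root t') ->
  exists t, root t = S /\ derivation lrule t /\ tree_rel hs_eq (tmap hyp t) t'.
Proof.
  intros Hd; elim Hd using derivation_ind_nested; clear t' Hd; intros r h ts' HR _ IH S HS HSh.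
  destruct (lrule_of_hrule r _ h S HR HS HSh) as (Ss & HL & HSs).
  assert (Hwf : Forall lwf Ss) by (destruct HL as (_ & _ & _ & _ & _ & _ & Hwf); exact Hwf).
  assert (Hts : exists ts, map root ts = Ss /\ Forall (derivation lrule) ts /\
            Forall2 (tree_rel hs_eq) (map (tmap hyp) ts) ts').
  { clear - IH HSs Hwf; revert Ss HSs Hwf.
    induction IH as [|t' ts' Ht _ IHts]; intros [|S Ss] HSs Hwf; inversion HSs; subst.
    - exists []; repeat constructor.
    - inversion Hwf; subst.
      destruct (Ht S) as (t & <- & Hd & Hrel); [assumption..|].
      destruct (IHts Ss) as (ts & <- & Hds & Hrels); [assumption..|].
      exists (t :: ts); repeat constructor; assumption. }
  destruct Hts as (ts & <- & Hds & Hrels).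
  exists (Node r S ts); repeat constructor; assumption.
Qed.

Theorem mainTheorem2 :
  (forall r Ss S, lrule r Ss S -> hrule r (map hyp Ss) (hyp S)) /\
  (forall r Hs G, hrule r Hs G ->
     exists Ss S, lrule r Ss S /\ Forall2 hs_eq (map hyp Ss) Hs /\
                  hs_eq (hyp S) G) /\
  (forall t, derivation lrule t -> derivation hrule (tmap hyp t)) /\
  (forall t', derivation hrule t' ->
     exists t, derivation lrule t /\ tree_rel hs_eq (tmap hyp t) t').
Proof.
  split; [exact hrule_of_lrule|]; split; [|split; [exact derivation_tmap_hyp|]].
  - intros r Hs G Hr.
    destruct (hyp_surjective G) as (S & HS & <-).
    destruct (lrule_of_hrule r Hs _ S Hr HS (reflexivity _)) as (Ss & HL & HSs).
    exists Ss, S; repeat split; [exact HL | exact HSs | reflexivity].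
  - intros t' Hd.
    destruct (hyp_surjective (root t')) as (S & HS & HSt).
    destruct (derivation_lift t' Hd S HS) as (t & _ & Ht & Hrel); [rewrite HSt; reflexivity|].
    exists t; split; assumption.
Qed.
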